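(* Let $(S,|\cdot|)$ be a finite metric space with $n\ge 3$ points, let $t\ge 1$ be a real number, and let $G'=(S,E')$ be a $t$-spanner for $S$ with $m$ edges. Let $G=(S,E)$ be the graph obtained from $G'$ by the construction described in the context with parameter $f=1$. Then $G$ is a $1$-faulty-degree $(3t)$-spanner for $S$ and has at most $3m$ edges.
   Context: For a finite metric space $(S,|\cdot|)$, $K_S$ denotes the complete graph on $S$ in which each edge $\{p,q\}$ has weight $|pq|$. All graphs on vertex set $S$ considered have edge weights $|pq|$. For an edge-weighted graph $X$ and vertices $p,q$, $\delta_X(p,q)$ is the length of a shortest path between $p$ and $q$ in $X$ ($+\infty$ if none exists). For a set $F$ of edges, $X\setminus F$ is the graph with the same vertex set as $X$ and edge set $E_X\setminus F$. A graph $G'=(S,E')$ is a $t$-spanner for $S$ if $\delta_{G'}(p,q)\le t|pq|$ for all $p,q\in S$. For an integer $f\ge 0$ and real $t\ge1$, a graph $G=(S,E)$ is an $f$-faulty-degree $t$-spanner for $S$ if for every subset $F\subseteq E$ such that the graph $(S,F)$ has maximum degree at most $f$, and for all $p,q\in S$, $\delta_{G\setminus F}(p,q)\le t\cdot\delta_{K_S\setminus F}(p,q)$. Construction: Let $G'=(S,E')$ be a $t$-spanner for $S$, $n=|S|$, and let $f$ be an integer with $1\le f\le (n-1)/2$. For each edge $\{a,b\}\in E'$, list the points of $S\setminus\{a,b\}$ as $c_1,\dots,c_{n-2}$ in non-decreasing order of $|ac_i|+|c_ib|$ (ties broken arbitrarily) and let $C_{ab}=\{c_1,\dots,c_{2f-1}\}$.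 The graph $G=(S,E)$ has edge set $E=E'\cup\{\{a,c\},\{c,b\}:\{a,b\}\in E',\ c\in C_{ab}\}$. *)

From HB Require Import structures.
From mathcomp Require Import all_boot all_order all_algebra.
From mathcomp Require Import classical_sets reals constructive_ereal ereal.
Set Implicit Arguments. Unset Strict Implicit. Unset Printing Implicit Defensive.
Import Order.TTheory GRing.Theory Num.Theory.
Local Open Scope ring_scope.

Section Defs.
Variables (R : realType) (T : finType) (d : T -> T -> R).

Definition is_metric : Prop :=
  [/\ forall x y, d x y = 0 <-> x = y,
      forall x y, 0 <= d x y,
      forall x y, d x y = d y x &
      forall x y z, d x z <= d x y + d y z].

(* edges of a graph on T are 2-element subsets; K_S has all of them *)
Definition complete_edges : {set {set T}} := [set e : {set T} | #|e| == 2].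

Definition is_walk (E : {set {set T}}) (p q : T) (s : seq T) : bool :=
  path (fun x y => [set x; y] \in E) p s && (last p s == q).

Definition walk_length (p : T) (s : seq T) : R :=
  \sum_(xy <- zip (p :: s) s) d xy.1 xy.2.

(* shortest-path distance delta_X(p,q), +oo if no path *)
Definition delta (E : {set {set T}}) (p q : T) : \bar R :=
  ereal_inf [set (walk_length p s)%:E | s in [set s | is_walk E p q s]].

Definition is_spanner (E : {set {set T}}) (t : R) : Prop :=
  forall p q, (delta E p q <= (t * d p q)%:E)%E.

Definition max_deg_le (F : {set {set T}}) (f : nat) : Prop :=
  forall v : T, (#|[set e in F | v \in e]| <= f)%N.

Definition is_fault_degree_spanner (E : {set {set T}}) (f : nat) (t : R) : Prop :=
  forall F : {set {set T}}, F \subset E -> max_deg_le F f ->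
  forall p q, (delta (E :\: F) p q <= t%:E * delta (complete_edges :\: F) p q)%E.

(* the construction with f = 1: for each edge e = {a,b} of E', ch e is the
   point c_1 of C_ab; add the edges {a, c_1} and {c_1, b}. *)
Definition construction (E' : {set {set T}}) (ch : {set T} -> T) : {set {set T}} :=
  E' :|: \bigcup_(e in E') [set [set x; ch e] | x in e].

Definition valid_choice (E' : {set {set T}}) (ch : {set T} -> T) : Prop :=
  forall a b, [set a; b] \in E' ->
    ch [set a; b] \notin [set a; b] /\
    forall c, c \notin [set a; b] ->
      d a (ch [set a; b]) + d (ch [set a; b]) b <= d a c + d c b.

End Defs.

From HB Require Import structures.
From mathcomp Require Import all_boot all_order all_algebra.
From mathcomp Require Import classical_sets reals constructive_ereal ereal.
From mathcomp Require Import lra.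
Import Order.TTheory GRing.Theory Num.Theory.
Local Open Scope ring_scope.
Set Implicit Arguments. Unset Strict Implicit. Unset Printing Implicit Defensive.

(* Faults of maximum degree 1 form a matching.  A faulty edge {a,b} of G' is
   bypassed through c = c_1(a,b): the edges {a,c} and {c,b} share a vertex with
   the faulty {a,b}, hence are not faulty, and |ac| + |cb| <= |au| + |ub| for every
   u outside {a,b}.  On a simple path of G' the faulty edges are pairwise
   non-adjacent, so taking for u the far end of a neighbouring non-faulty edge
   {b,u} costs |ab| + 2|bu|; charging these to the neighbour keeps the stretch at 3,
   except for a non-faulty edge between two faulty ones, where both detours are
   routed through the chosen point of the middle edge instead.  Thus every
   non-faulty edge {x,y} has a path of length <= 3t|xy| in G \ F, and so does
   every path of K_S \ F.  Each edge of G' adds at most two edges, so |E| <= 3m. *)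

Section Walks.
Variables (R : realType) (T : finType) (d : T -> T -> R).
Hypothesis d_metric : is_metric d.
Implicit Types (E : {set {set T}}) (p q x y z : T) (s : seq T).

Lemma dist_ge0 x y : 0 <= d x y. Proof. by case: d_metric. Qed.
Lemma distC x y : d x y = d y x. Proof. by case: d_metric. Qed.
Lemma dist_triangle x y z : d x z <= d x y + d y z. Proof. by case: d_metric. Qed.

Lemma walk_length_nil p : walk_length d p [::] = 0.
Proof. by rewrite /walk_length big_nil. Qed.

Lemma walk_length_cons p x s : walk_length d p (x :: s) = d p x + walk_length d x s.
Proof. by rewrite /walk_length /= big_cons. Qed.

Lemma walk_length_cat p s1 s2 :
  walk_length d p (s1 ++ s2) = walk_length d p s1 + walk_length d (last p s1) s2.
Proof.
elim: s1 p => [|x s1 IH] p /=; first by rewrite walk_length_nil add0r.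
by rewrite !walk_length_cons IH addrA.
Qed.

Lemma walk_length_ge0 p s : 0 <= walk_length d p s.
Proof.
elim: s p => [|x s IH] p; first by rewrite walk_length_nil.
by rewrite walk_length_cons addr_ge0 ?dist_ge0.
Qed.

Lemma uniq_shorten_walk (e : rel T) x s : path e x s ->
  exists s', [/\ uniq (x :: s'), path e x s', last x s' = last x s &
    walk_length d x s' <= walk_length d x s].
Proof.
elim: s x => [|y s IH] x /=; first by exists [::].
case/andP=> exy /IH [s0 [u0 p0 l0 w0]].
have {w0} w0 : walk_length d x (y :: s0) <= walk_length d x (y :: s).
  by rewrite !walk_length_cons lerD.
case: (boolP (x \in y :: s0)) => [xin|xN]; last first.
  by exists (y :: s0); split; rewrite //= ?xN ?exy.
(* restate the facts on [s0] in terms of [y :: s0], the sequence [splitPr] splits *)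
have {l0} l0 : last x (y :: s0) = last x (y :: s) := l0.
have {p0} p0 : sorted e (y :: s0) := p0.
move: u0 p0 l0 w0; case/splitPr: xin => pre post.
rewrite cat_uniq sorted_cat_cons last_cat => /and3P[_ _ upost] /andP[_ ppost] l0 w0.
exists post; split=> //; apply: le_trans w0.
by rewrite walk_length_cat walk_length_cons addrA lerDr addr_ge0 ?walk_length_ge0 ?dist_ge0.
Qed.

Definition walk_within E p q (r : R) :=
  exists2 s, is_walk E p q s & walk_length d p s <= r.

Lemma walk_within_nil E p : walk_within E p p 0.
Proof. by exists [::]; rewrite /is_walk ?walk_length_nil /=. Qed.

Lemma walk_within_edge E p q : [set p; q] \in E -> walk_within E p q (d p q).
Proof.
move=> pq; exists [:: q]; first by rewrite /is_walk /= pq eqxx.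
by rewrite walk_length_cons walk_length_nil addr0.
Qed.

Lemma walk_within_le E p q r1 r2 :
  r1 <= r2 -> walk_within E p q r1 -> walk_within E p q r2.
Proof. by move=> le [s w l]; exists s => //; apply: le_trans le. Qed.

Lemma walk_within_cat E p q z r1 r2 r :
  walk_within E p q r1 -> walk_within E q z r2 -> r1 + r2 <= r -> walk_within E p z r.
Proof.
move=> [s1 /andP[w1 /eqP l1] le1] [s2 /andP[w2 /eqP l2] le2] le.
exists (s1 ++ s2); first by rewrite /is_walk cat_path last_cat l1 w1 w2 l2 eqxx.
by rewrite walk_length_cat l1 (le_trans _ le) ?lerD.
Qed.

Lemma delta_leP E p q r :
  (delta d E p q <= r%:E)%E <-> forall e, 0 < e -> walk_within E p q (r + e).
Proof.
split=> [le e e0 | within].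
  have : (delta d E p q < (r + e)%:E)%E by apply: le_lt_trans le _; rewrite lte_fin ltrDl.
  by case/ereal_inf_lt => _ [s ws <-]; rewrite lte_fin => /ltW; exists s.
apply/lee_addgt0Pr => e /within[s ws le]; rewrite -EFinD.
apply: le_trans (ereal_inf_lbound _) _; first by exists s.
by rewrite lee_fin.
Qed.

Section Stretch.
Variables (E1 E2 : {set {set T}}) (c : R).
Hypothesis c_gt0 : 0 < c.
Hypothesis edge_stretch :
  forall x y, [set x; y] \in E2 -> (delta d E1 x y <= (c * d x y)%:E)%E.

Lemma walk_stretch p q s e : 0 < e -> is_walk E2 p q s ->
  walk_within E1 p q (c * walk_length d p s + e).
Proof.
elim: s p e => [|x s IH] p e e0 /andP[/= ps /eqP pq].
  rewrite -pq walk_length_nil mulr0 add0r.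
  exact: walk_within_le (ltW e0) (walk_within_nil _ _).
case/andP: ps => px ps; have e2 : 0 < e / 2 by rewrite divr_gt0.
apply: (walk_within_cat ((delta_leP _ _ _ _).1 (edge_stretch px) _ e2) (IH x _ e2 _)).
- by rewrite /is_walk ps pq eqxx.
- by rewrite walk_length_cons; lra.
Qed.

Lemma delta_stretch p q : (delta d E1 p q <= c%:E * delta d E2 p q)%E.
Proof.
rewrite -lee_pdivrMl //; apply: le_ereal_inf_tmp => _ [s ws <-].
by rewrite lee_pdivrMl // -EFinM; apply/delta_leP => e e0; apply: walk_stretch.
Qed.

End Stretch.

Section FaultTolerance.
Variables (E' F : {set {set T}}) (ch : {set T} -> T).
Hypothesis ch_valid : valid_choice d E' ch.
Hypothesis F_matching : max_deg_le F 1.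

Let EF : {set {set T}} := construction E' ch :\: F.

Lemma fault_edges_meet e1 e2 v : e1 \in F -> e2 \in F -> v \in e1 -> v \in e2 -> e1 = e2.
Proof.
move=> e1F e2F ve1 ve2; apply/eqP; apply: contraT => e12.
have : (#|[set e1; e2]| <= #|[set e in F | v \in e]|)%N.
  by apply/subset_leq_card/fintype.subsetP => e; rewrite !inE => /orP[] /eqP->; apply/andP.
by rewrite cards2 e12 => /leq_trans/(_ (F_matching v)).
Qed.

Lemma fault_incident_nonfault e x y : e \in F -> x \in e -> y \notin e ->
  [set x; y] \notin F.
Proof.
move=> eF xe; apply: contra => xyF.
by rewrite (fault_edges_meet eF xyF xe (set21 x y)) set22.
Qed.

Lemma nonfault_edge x y : [set x; y] \in E' -> [set x; y] \notin F ->
  walk_within EF x y (d x y).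
Proof. by move=> xyE xyF; apply: walk_within_edge; rewrite inE xyF inE xyE. Qed.

Lemma chosen_edge a b x : [set a; b] \in E' -> x \in [set a; b] ->
  [set x; ch [set a; b]] \in construction E' ch.
Proof.
move=> abE xab; rewrite inE; apply/orP; right.
by apply/bigcupP; exists [set a; b] => //; apply: imset_f.
Qed.

Lemma fault_detour a b u : [set a; b] \in E' -> [set a; b] \in F -> u \notin [set a; b] ->
  walk_within EF a b (d a u + d u b).
Proof.
move=> abE abF uab; have [cab cmin] := ch_valid abE.
set c := ch [set a; b] in cab cmin *.
apply: (walk_within_cat (walk_within_edge _)); last exact: cmin.
- by rewrite inE (fault_incident_nonfault abF) ?chosen_edge ?set21.
- apply: walk_within_edge.
  by rewrite finset.setUC inE (fault_incident_nonfault abF) ?chosen_edge ?set22.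
Qed.

Lemma fault_nonfault_within v0 v1 v2 : uniq [:: v0; v1; v2] ->
  [set v0; v1] \in E' -> [set v0; v1] \in F -> [set v1; v2] \in E' ->
  walk_within EF v0 v2 (3 * (d v0 v1 + d v1 v2)).
Proof.
rewrite /= !inE !negb_or => /and3P[/andP[_ n02] n12 _] e01 f01 e12.
have v2N : v2 \notin [set v0; v1] by rewrite !inE negb_or ![v2 == _]eq_sym n02 n12.
have f12 := fault_incident_nonfault f01 (set22 v0 v1) v2N.
apply: walk_within_cat (fault_detour e01 f01 v2N) (nonfault_edge e12 f12) _.
by have := dist_triangle v0 v1 v2; have := distC v2 v1; have := dist_ge0 v0 v1; lra.
Qed.

Lemma nonfault_fault_within v0 v1 v2 : uniq [:: v0; v1; v2] ->
  [set v0; v1] \in E' -> [set v0; v1] \notin F ->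
  [set v1; v2] \in E' -> [set v1; v2] \in F ->
  walk_within EF v0 v2 (3 * (d v0 v1 + d v1 v2)).
Proof.
rewrite /= !inE !negb_or => /and3P[/andP[n01 n02] _ _] e01 f01 e12 f12.
have v0N : v0 \notin [set v1; v2] by rewrite !inE negb_or n01 n02.
apply: walk_within_cat (nonfault_edge e01 f01) (fault_detour e12 f12 v0N) _.
have := dist_triangle v0 v1 v2; have := distC v1 v0; have := dist_ge0 v0 v1.
by have := dist_ge0 v1 v2; lra.
Qed.

Lemma fault_nonfault_fault_within v0 v1 v2 v3 : uniq [:: v0; v1; v2; v3] ->
  [set v0; v1] \in E' -> [set v0; v1] \in F -> [set v1; v2] \in E' ->
  [set v2; v3] \in E' -> [set v2; v3] \in F ->
  walk_within EF v0 v3 (3 * (d v0 v1 + d v1 v2 + d v2 v3)).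
Proof.
rewrite /= !inE !negb_or => /and4P[/and3P[n01 n02 n03] /andP[n12 n13] n23 _].
move=> e01 f01 e12 e23 f23.
have [cN cmin] := ch_valid e12; set c := ch [set v1; v2] in cN cmin *.
have t012 := dist_triangle v0 v1 v2; have t123 := dist_triangle v1 v2 v3.
have v2N : v2 \notin [set v0; v1] by rewrite !inE negb_or ![v2 == _]eq_sym n02 n12.
have [c0|c0] := eqVneq c v0.
  have e02 : [set v0; v2] \in EF.
    rewrite /EF inE (fault_incident_nonfault f01 (set21 v0 v1) v2N) /=.
    by rewrite finset.setUC -c0 chosen_edge ?set22.
  have v0N : v0 \notin [set v2; v3] by rewrite !inE negb_or n02 n03.
  apply: walk_within_cat (walk_within_edge e02) (fault_detour e23 f23 v0N) _.
  have := dist_triangle v0 v2 v3; have := distC v0 v2.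
  by have := dist_ge0 v2 v3; lra.
have [c3|c3] := eqVneq c v3.
  have e13 : [set v1; v3] \in EF.
    have f13 : [set v1; v3] \notin F.
      by rewrite finset.setUC (fault_incident_nonfault f23) ?set22 // !inE negb_or n12 n13.
    by rewrite /EF inE f13 -c3 chosen_edge ?set21.
  have v3N : v3 \notin [set v0; v1] by rewrite !inE negb_or ![v3 == _]eq_sym n03 n13.
  apply: walk_within_cat (fault_detour e01 f01 v3N) (walk_within_edge e13) _.
  have := dist_triangle v0 v1 v3; have := distC v1 v3.
  by have := dist_ge0 v0 v1; lra.
have f12 := fault_incident_nonfault f01 (set22 v0 v1) v2N.
have cN01 : c \notin [set v0; v1] by move: cN; rewrite !inE !negb_or c0 => /andP[-> _].
have cN23 : c \notin [set v2; v3] by move: cN; rewrite !inE !negb_or c3 => /andP[_ ->].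
have := walk_within_cat (fault_detour e01 f01 cN01) (nonfault_edge e12 f12) (lexx _).
move/walk_within_cat/(_ (fault_detour e23 f23 cN23)); apply.
(* minimality of [c] against both [v0] and [v3] bounds [2 (|v1 c| + |c v2|)] *)
have m0 : d v1 c + d c v2 <= d v1 v0 + d v0 v2 by apply: cmin; rewrite !inE negb_or n01 n02.
have m3 : d v1 c + d c v2 <= d v1 v3 + d v3 v2.
  by apply: cmin; rewrite !inE negb_or ![v3 == _]eq_sym n13 n23.
have := dist_triangle v0 v1 c; have := dist_triangle c v2 v3; have := distC c v1.
have := distC v2 c; have := distC v1 v0; have := distC v3 v2; lra.
Qed.

(* a lone faulty edge has no neighbour on the path to charge its detour to *)
Definition single_fault (p : T) (s : seq T) : bool :=
  if s is [:: q] then [set p; q] \in F else false.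

Lemma nonfault_after_fault v1 v2 s : [set v1; v2] \in F -> uniq [:: v1, v2 & s] ->
  ~~ single_fault v2 s.
Proof.
case: s => [|v3 [|? ?]] //= f12; rewrite !inE !negb_or => /and3P[/andP[_ n13] n23 _].
by rewrite (fault_incident_nonfault f12) ?set22 // !inE negb_or !(eq_sym v3) n13 n23.
Qed.

Lemma simple_path_within v0 s : uniq (v0 :: s) ->
  path (fun x y => [set x; y] \in E') v0 s -> ~~ single_fault v0 s ->
  walk_within EF v0 (last v0 s) (3 * walk_length d v0 s).
Proof.
have [n] := ubnP (size s); elim: n v0 s => // n IH v0 [|v1 s] sz u pth nsf.
  by rewrite walk_length_nil mulr0; apply: walk_within_nil.
case/andP: pth => e01; case: s => [|v2 s] in sz u nsf * => [_|/andP[e12 pth]].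
  rewrite walk_length_cons walk_length_nil addr0.
  by apply: walk_within_le (nonfault_edge e01 nsf); have := dist_ge0 v0 v1; lra.
have u3 : uniq [:: v0; v1; v2] := subseq_uniq (prefix_subseq [:: v0; v1; v2] s) u.
have u1 : uniq [:: v1, v2 & s] by case/andP: u.
have W := walk_length_ge0 v2 s; rewrite !walk_length_cons.
have [f01|f01] := boolP ([set v0; v1] \in F); last first.
  have [/andP[/eqP s0 f12]|hc] := boolP ((s == [::]) && ([set v1; v2] \in F)).
    rewrite s0 walk_length_nil /=.
    by apply: walk_within_le (nonfault_fault_within u3 e01 f01 e12 f12); lra.
  have nsf1 : ~~ single_fault v1 (v2 :: s) by case: (s) hc.
  apply: walk_within_cat (nonfault_edge e01 f01) (IH v1 _ _ u1 _ nsf1) _ => /=.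
  - by rewrite -ltnS.
  - by rewrite e12.
  - by rewrite walk_length_cons; have := dist_ge0 v0 v1; lra.
case: s {nsf} => [|v3 s] in sz u W pth u1 *.
  apply: walk_within_le (fault_nonfault_within u3 e01 f01 e12).
  by rewrite walk_length_nil; lra.
case/andP: pth => e23 pth; move: W; rewrite walk_length_cons => W.
have u2 : uniq [:: v2, v3 & s] by case/andP: u1.
have [f23|f23] := boolP ([set v2; v3] \in F); last first.
  have nsf2 : ~~ single_fault v2 (v3 :: s) by case: (s) f23.
  apply: walk_within_cat (fault_nonfault_within u3 e01 f01 e12) (IH v2 _ _ u2 _ nsf2) _ => /=.
  - by rewrite -ltnS ltnW.
  - by rewrite e23.
  - by rewrite walk_length_cons; lra.
have u4 : uniq [:: v0; v1; v2; v3] := subseq_uniq (prefix_subseq [:: v0; v1; v2; v3] s) u.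
have u3s : uniq (v3 :: s) by case/andP: u2.
apply: walk_within_cat (fault_nonfault_fault_within u4 e01 f01 e12 e23 f23)
  (IH v3 _ _ u3s pth (nonfault_after_fault f23 u2)) _.
- by rewrite -ltnS ltnW // ltnW.
- by lra.
Qed.

Variable t : R.
Hypothesis E'_spanner : is_spanner d E' t.

Lemma nonfault_stretch x y : [set x; y] \notin F ->
  (delta d EF x y <= (3 * t * d x y)%:E)%E.
Proof.
move=> xyF; apply/delta_leP => e e0.
have /delta_leP/(_ (e / 3)) := E'_spanner x y.
case=> [|s /andP[pth /eqP last_s] len_s]; first by rewrite divr_gt0.
have [s' [u pth' last' len']] := uniq_shorten_walk pth.
have nsf : ~~ single_fault x s'.
  by case: s' last' {u pth' len'} => [|? []] //= ->; rewrite last_s.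
have := simple_path_within u pth' nsf; rewrite last' last_s.
by apply: walk_within_le; lra.
Qed.

End FaultTolerance.
End Walks.

Lemma card_bigcup_le (T I : finType) (A : {pred I}) (f : I -> {set T}) :
  (#|\bigcup_(i in A) f i| <= \sum_(i in A) #|f i|)%N.
Proof.
apply: (big_ind2 (fun (S : {set T}) n => #|S| <= n)%N); first by rewrite cards0.
  by move=> S1 n1 S2 n2 le1 le2; apply: leq_trans (leq_card_setU S1 S2).1 (leq_add le1 le2).
by [].
Qed.

Lemma card_construction_le (T : finType) (E' : {set {set T}}) (ch : {set T} -> T) :
  E' \subset complete_edges T -> (#|construction E' ch| <= 3 * #|E'|)%N.
Proof.
move=> E'_edges; apply: leq_trans (leq_card_setU _ _).1 _.
rewrite mulSn leq_add2l; apply: leq_trans (card_bigcup_le _ _) _.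
rewrite mulnC -sum_nat_const; apply: leq_sum => e eE'.
apply: leq_trans (leq_imset_card _ _) _.
by move/fintype.subsetP/(_ e eE'): E'_edges; rewrite inE => /eqP ->.
Qed.

Theorem theorem1 (R : realType) (T : finType) (d : T -> T -> R)
  (t : R) (E' : {set {set T}}) (ch : {set T} -> T) :
  is_metric d -> (3 <= #|T|)%N -> 1 <= t ->
  E' \subset complete_edges T -> is_spanner d E' t ->
  valid_choice d E' ch ->
  is_fault_degree_spanner d (construction E' ch) 1 (3 * t) /\
  (#|construction E' ch| <= 3 * #|E'|)%N.
Proof.
(* [3 <= #|T|] only ensures that the points c_1 exist, which [valid_choice] provides *)
move=> d_metric _ t_ge1 E'_edges E'_spanner ch_valid.
split; last exact: card_construction_le.
move=> F _ F_matching p q; apply: delta_stretch => // [|x y]; first lra.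
by rewrite inE => /andP[xyF _]; apply: nonfault_stretch.
Qed.
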